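(* For any finite, connected, pointed, edge-ordered graph $G$ with distinguished vertex $v_0$, the graph $S(G)$ (defined below) is an arborescence.
   Context: A (directed) graph is $(V,\to)$ with $\to\subseteq V\times V$; $N(u)$ is the set of outgoing edges of $u$. A pointed graph has a distinguished vertex $v_0$; connected means every vertex is reachable by a path from $v_0$. A path is a finite sequence $v_1\to\cdots\to v_n$ of vertices joined by edges, with length $|\pi|$; co-initial paths share their source; $\pi\sqsubset\sigma$ means $\pi$ is a proper prefix of $\sigma$. A finite edge-ordered graph is a finite graph with a strict linear order $\triangleleft$ on each neighborhood. Lexicographic path order: if $\pi\sqsubset\sigma$ then $\pi\prec\sigma$ (symmetrically); otherwise, with $\zeta$ the longest common prefix, $u$ its target and $v_1,v_2$ the next vertices, $\pi\prec\sigma$ iff $u\to v_1\triangleleft u\to v_2$. $\min^s(u\rightsquigarrow v)$ is the lexicographically least shortest path from $u$ to $v$. An arborescence is a pointed graph such that for every vertex $u$ there is a unique path $v_0\rightsquigarrow u$. $S(G)$ is the graph with the vertices and distinguished vertex of $G$, containing an edge $u\to v$ iff $u\to v$ is an edge of the path $\min^s(v_0\rightsquigarrow v)$ in $G$, with co-initial edges ordered as in $G$. *)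

From mathcomp Require Import all_boot.
Set Implicit Arguments. Unset Strict Implicit. Unset Printing Implicit Defensive.

Section Graphs.
Variable V : finType.

(* A path from x is represented by its source x and the sequence p of the
   remaining vertices: x :: p; its target is last x p, its length size p. *)

(* Edge order: for each u, ord u is a strict linear order on the
   out-neighbourhood N(u) (edges out of u are identified with their targets). *)
Definition edge_ordered (e : rel V) (ord : V -> rel V) : Prop :=
  [/\ (forall u v, e u v -> ~~ ord u v v),
      (forall u a b c, e u a -> e u b -> e u c ->
          ord u a b -> ord u b c -> ord u a c) &
      (forall u v w, e u v -> e u w -> v != w -> ord u v w || ord u w v)].

Fixpoint lexlt (ord : V -> rel V) (x : V) (p q : seq V) : bool :=
  match p, q with
  | [::], _ :: _ => true
  | _, [::] => false
  | a :: p', b :: q' => if a == b then lexlt ord a p' q' else ord x a b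
  end.

Definition is_min_s (e : rel V) (ord : V -> rel V) (u v : V) (p : seq V) : Prop :=
  [/\ path e u p, last u p = v &
      forall q, path e u q -> last u q = v ->
        size p <= size q /\ (size q = size p -> q <> p -> lexlt ord u p q)].

Definition path_edges (x : V) (p : seq V) : seq (V * V) := zip (x :: p) p.

Definition S_edge (e : rel V) (ord : V -> rel V) (v0 : V) (u v : V) : Prop :=
  exists p, is_min_s e ord v0 v p /\ (u, v) \in path_edges v0 p.

Fixpoint ppath (E : V -> V -> Prop) (x : V) (p : seq V) : Prop :=
  match p with
  | [::] => True
  | y :: p' => E x y /\ ppath E y p'
  end.

Definition arborescence (E : V -> V -> Prop) (v0 : V) : Prop :=
  forall u, exists! p : seq V, ppath E v0 p /\ last v0 p = u.

End Graphs.

From mathcomp Require Import all_boot.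

Set Implicit Arguments. Unset Strict Implicit.

(* The lexicographic order is a strict total order on co-initial paths of equal
   length, so min^s(v0 ~> v) exists (finiteness) and is unique.  Removing the
   last vertex of a min^s path keeps it a min^s path, since appending a common
   last edge preserves both length and lexicographic comparisons.  Hence the
   only S-edge entering v != v0 is the last edge of min^s(v0 ~> v), none enters
   v0, and min^s(v0 ~> v) is the unique S-path from v0 to v. *)

Lemma minimal_exists (T : finType) (P : pred T) (lt : rel T) :
  {in P, irreflexive lt} -> {in P & &, transitive lt} ->
  forall x0, P x0 -> exists2 x, P x & forall y, P y -> ~~ lt y x.
Proof.
move=> lt_irr lt_trans x0 Px0.
pose below x := #|[pred y | P y && lt y x]|.
case: (arg_minnP below Px0) => x Px below_min; exists x => // y Py.
apply/negP => lt_yx.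
have : below y < below x.
  apply: proper_card; apply/properP; split.
    by apply/subsetP => z /andP[Pz lt_zy]; rewrite inE Pz (lt_trans y).
  by exists y; rewrite !inE ?Py ?lt_yx // lt_irr.
by rewrite ltnNge below_min.
Qed.

Section Lexicographic.
Variables (V : finType) (e : rel V) (ord : V -> rel V).
Hypothesis e_ord : edge_ordered e ord.

Lemma lexlt_irr x p : lexlt ord x p p = false.
Proof. by elim: p x => [|a p IH] x //=; rewrite eqxx IH. Qed.

Lemma lexlt_trans x p q r : path e x p -> path e x q -> path e x r ->
  lexlt ord x p q -> lexlt ord x q r -> lexlt ord x p r.
Proof.
case: e_ord => ord_irr ord_trans _.
elim: p x q r => [|a p IH] x [|b q] [|c r] //=.
move=> /andP[e_xa e_p] /andP[e_xb e_q] /andP[e_xc e_r].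
have [eq_ab|neq_ab] := eqVneq a b; have [eq_bc|neq_bc] := eqVneq b c;
  subst; rewrite ?eqxx ?(negbTE neq_bc) //.
- exact: IH.
- by rewrite (negbTE neq_ab).
have [eq_ac|neq_ac] := eqVneq a c; last exact: ord_trans.
subst=> lt_cb lt_bc; have := ord_irr _ _ e_xc.
by rewrite (ord_trans _ _ _ _ e_xc e_xb e_xc lt_cb lt_bc).
Qed.

Lemma lexlt_asym x p q : path e x p -> path e x q ->
  lexlt ord x p q -> ~~ lexlt ord x q p.
Proof.
move=> e_p e_q lt_pq; apply/negP => lt_qp.
by have := lexlt_trans e_p e_q e_p lt_pq lt_qp; rewrite lexlt_irr.
Qed.

Lemma lexlt_total x p q : path e x p -> path e x q -> size p = size q ->
  p != q -> lexlt ord x p q || lexlt ord x q p.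
Proof.
case: e_ord => _ _ ord_total.
elim: p x q => [|a p IH] x [|b q] //= /andP[e_xa e_p] /andP[e_xb e_q] [size_pq].
have [eq_ab|neq_ab] := eqVneq a b.
  by subst b; rewrite eqseq_cons eqxx; exact: IH.
by move=> _; exact: ord_total.
Qed.

Lemma lexlt_rcons2 x p q b : size p = size q ->
  lexlt ord x (rcons p b) (rcons q b) = lexlt ord x p q.
Proof.
elim: p x q => [|a p IH] x [|c q] //= => [_|[size_pq]]; first by rewrite eqxx.
by case: (a == c); rewrite ?IH.
Qed.

End Lexicographic.

Lemma ppath_rcons (V : finType) (E : V -> V -> Prop) x p y :
  ppath E x (rcons p y) <-> ppath E x p /\ E (last x p) y.
Proof.
elim: p x => [|a p IH] x /=; first by split; [case|case].
split=> [[E_xa /IH[E_p E_y]] | [[E_xa E_p] E_y]] //.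
by split=> //; apply/IH.
Qed.

Lemma ppath_last_inj (V : finType) (E : V -> V -> Prop) x :
  (forall u, ~ E u x) -> (forall u u' v, E u v -> E u' v -> u = u') ->
  forall p q, ppath E x p -> ppath E x q -> last x p = last x q -> p = q.
Proof.
move=> no_in_x in_uniq.
elim/last_ind => [|p a IH] q; case/lastP: q => [|q b] //.
- move=> _ /ppath_rcons[_ E_b]; rewrite last_rcons => /= eq_xb.
  by subst b; case: (no_in_x _ E_b).
- move=> /ppath_rcons[_ E_a] _; rewrite last_rcons => /= eq_ax.
  by subst a; case: (no_in_x _ E_a).
move=> /ppath_rcons[E_p E_a] /ppath_rcons[E_q E_b]; rewrite !last_rcons => eq_ab.
subst b.
by rewrite (IH q E_p E_q (in_uniq _ _ _ E_a E_b)).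
Qed.

Lemma mem_path_edges (V : finType) (x u v : V) p :
  (u, v) \in path_edges x p -> exists p1 p2, p = p1 ++ v :: p2 /\ last x p1 = u.
Proof.
elim: p x => [|a p IH] x //=; rewrite inE => /orP[/eqP[-> ->]|/IH[p1 [p2 [-> <-]]]].
  by exists [::], p.
by exists (a :: p1), p2.
Qed.

Lemma last_path_edges (V : finType) (x b : V) p :
  (last x p, b) \in path_edges x (rcons p b).
Proof.
elim: p x => [|a p IH] x /=; first by rewrite mem_seq1.
by rewrite inE IH orbT.
Qed.

Section MinShortestPaths.
Variables (V : finType) (e : rel V) (ord : V -> rel V) (v0 : V).
Hypothesis e_ord : edge_ordered e ord.

Lemma is_min_s_exists v : connect e v0 v -> exists p, is_min_s e ord v0 v p.
Proof.
move=> /connectP[p0 e_p0 last_p0].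
pose reach n := [exists t : n.-tuple V, path e v0 t && (last v0 t == v)].
have reach_p0 : exists n, reach n.
  by exists (size p0); apply/existsP; exists (in_tuple p0); rewrite e_p0 last_p0 eqxx.
have [m /existsP[t0 t0_reach] m_min] := ex_minnP reach_p0.
pose reach_m : pred (m.-tuple V) := fun t => path e v0 t && (last v0 t == v).
pose lex_m : rel (m.-tuple V) := fun s t => lexlt ord v0 s t.
have lex_irr : {in reach_m, irreflexive lex_m}.
  by move=> t _; rewrite /lex_m lexlt_irr.
have lex_trans : {in reach_m & &, transitive lex_m}.
  move=> t2 t1 t3 /andP[e_t1 _] /andP[e_t2 _] /andP[e_t3 _].
  exact: (lexlt_trans e_ord).
have [t /andP[e_t /eqP last_t] t_min] := minimal_exists lex_irr lex_trans t0_reach.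
exists t; split=> // q e_q last_q.
have q_reach : reach (size q).
  by apply/existsP; exists (in_tuple q); rewrite e_q last_q eqxx.
split=> [|size_q neq_qt]; first by rewrite size_tuple m_min.
have /orP[lt_qt|-> //] : lexlt ord v0 q t || lexlt ord v0 t q.
  by apply: (lexlt_total e_ord) => //; apply/eqP.
have size_qm : size q == m by rewrite size_q size_tuple.
have := t_min (Tuple size_qm); rewrite /reach_m /lex_m /= e_q last_q eqxx lt_qt.
by move=> /(_ isT).
Qed.

Lemma is_min_s_uniq v p q :
  is_min_s e ord v0 v p -> is_min_s e ord v0 v q -> p = q.
Proof.
move=> [e_p last_p p_min] [e_q last_q q_min].
have [le_pq lt_pq] := p_min q e_q last_q; have [le_qp lt_qp] := q_min p e_p last_p.
have size_pq : size q = size p by apply/eqP; rewrite eqn_leq le_qp le_pq.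
have [//|/eqP neq_pq] := eqVneq p q.
have := lexlt_asym e_ord e_p e_q (lt_pq size_pq (nesym neq_pq)).
by rewrite (lt_qp (esym size_pq) neq_pq).
Qed.

Lemma is_min_s_belast v p b :
  is_min_s e ord v0 v (rcons p b) -> is_min_s e ord v0 (last v0 p) p.
Proof.
move=> [e_pb last_pb pb_min]; rewrite last_rcons in last_pb; subst v.
move: (e_pb); rewrite rcons_path => /andP[e_p e_b].
split=> // q e_q last_q.
have e_qb : path e v0 (rcons q b) by rewrite rcons_path e_q last_q e_b.
have [le_pq lt_pq] := pb_min _ e_qb (last_rcons _ _ _).
split=> [|size_q neq_qp]; first by rewrite !size_rcons in le_pq.
rewrite -(lexlt_rcons2 ord v0 b (esym size_q)).
by apply: lt_pq => [|/rcons_inj[]//]; rewrite !size_rcons size_q.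
Qed.

Lemma is_min_s_path_edges v p u :
  is_min_s e ord v0 v p -> (u, v) \in path_edges v0 p ->
  exists2 p1, p = rcons p1 v & last v0 p1 = u.
Proof.
move=> [e_p last_p p_min] /mem_path_edges[p1 [p2 [def_p last_p1]]].
have e_p1v : path e v0 (rcons p1 v).
  by move: e_p; rewrite def_p -cat_rcons cat_path => /andP[].
have [le_p _] := p_min _ e_p1v (last_rcons _ _ _).
move: le_p; rewrite def_p size_rcons size_cat.
case: p2 def_p => [|b p2] _ /= le_p; first by exists p1; rewrite ?cats1.
by move: le_p; rewrite !addnS ltnS ltnNge leq_addr.
Qed.

Lemma no_S_edge_to_root u : ~ S_edge e ord v0 u v0.
Proof.
move=> [p [p_min /(is_min_s_path_edges p_min)[p1 def_p _]]].
case: p_min => _ _ /(_ [::] isT erefl)[].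
by rewrite def_p size_rcons.
Qed.

Lemma S_edge_in_uniq u u' v : S_edge e ord v0 u v -> S_edge e ord v0 u' v -> u = u'.
Proof.
move=> [p [p_min uv_in]] [p' [p'_min u'v_in]].
have [p1 def_p <-] := is_min_s_path_edges p_min uv_in.
have [p1' def_p' <-] := is_min_s_path_edges p'_min u'v_in.
have := is_min_s_uniq p_min p'_min; rewrite def_p def_p'.
by move=> /rcons_inj[->].
Qed.

Lemma is_min_s_ppath_S_edge v p :
  is_min_s e ord v0 v p -> ppath (S_edge e ord v0) v0 p.
Proof.
elim/last_ind: p v => [//|p b IH] v pb_min.
apply/ppath_rcons; split; first exact: IH (is_min_s_belast pb_min).
have [_ last_pb _] := pb_min; rewrite last_rcons in last_pb; subst v.
by exists (rcons p b); split; last exact: last_path_edges.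
Qed.

End MinShortestPaths.

Theorem lemma10p5 (V : finType) (e : rel V) (ord : V -> rel V) (v0 : V) :
  edge_ordered e ord ->
  (forall v, connect e v0 v) ->
  arborescence (S_edge e ord v0) v0.
Proof.
move=> e_ord e_connected u.
have [p p_min] := is_min_s_exists e_ord (e_connected u).
have S_p := is_min_s_ppath_S_edge p_min.
have [_ last_p _] := p_min.
exists p; split=> // q [S_q last_q].
apply: (ppath_last_inj _ _ S_p S_q); last by rewrite last_p last_q.
  exact: no_S_edge_to_root.
exact: S_edge_in_uniq.
Qed.
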